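(* Let $G\subseteq\mathrm{Cl}_n$ and $p$ a probability distribution on $G$ such that $S=\sum_{g\in G}p(g)\omega(g)^\dagger M\omega(g)$ is invertible, and for each $g\in G$ let $\Lambda(g)$ be a quantum channel. Then $S=\frac1d\sum_{a\in\mathbb{F}_2^{2n}}s_a|\sigma_a)(\sigma_a|$ with $s_a\in(0,1]$ (so the $s_a$ are the eigenvalues of $S$), each $\bar\Lambda_a$ is a quantum channel, and the noisy frame operator satisfies $$\tilde S:=\sum_{g\in G}p(g)\omega(g)^\dagger M\omega(g)\Lambda(g)=\frac1d\sum_{a\in\mathbb{F}_2^{2n}}s_a|\sigma_a)(\sigma_a|\bar\Lambda_a.$$ Furthermore, if every $\Lambda(g)$ is a Pauli channel, then $\bar\Lambda_a|\sigma_a)=\bar\lambda_a|\sigma_a)$ with $\bar\lambda_a\in[-1,1]$.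
   Context: $d=2^n$; $(A|B)=\mathrm{Tr}(A^\dagger B)$; $|A)(B|$ is the superoperator $C\mapsto(B|C)A$; $\omega(g)(A)=gAg^\dagger$, $\omega(g)^\dagger(A)=g^\dagger Ag$; $E_x=|x\rangle\langle x|$, $M=\sum_{x\in\mathbb{F}_2^n}|E_x)(E_x|$. Pauli operators $\sigma_a$, $a\in\mathbb{F}_2^{2n}$, with per-qubit convention $\sigma_{00}=\mathbb 1,\sigma_{01}=X,\sigma_{11}=Y,\sigma_{10}=Z$. $Z_z=\bigotimes_iZ^{z_i}$ for $z\in\mathbb{F}_2^n$; for $g\in\mathrm{Cl}_n$, $\Xi_z(g)$ is the Pauli operator $\sigma_b$ with $g^\dagger Z_zg=\pm\sigma_b$. $s_a=\sum_{z\in\mathbb{F}_2^n}\sum_{g\in G:\Xi_z(g)=\sigma_a}p(g)$, $\bar\Lambda_a=s_a^{-1}\sum_z\sum_{g\in G:\Xi_z(g)=\sigma_a}p(g)\Lambda(g)$. A Pauli channel is $\Lambda(\rho)=\sum_bq_b\sigma_b\rho\sigma_b$ with $q$ a probability vector; then $\Lambda(\sigma_a)=\lambda_a\sigma_a$. If $\Lambda(g)$ has eigenvalues $\lambda_a(g)$, $\bar\lambda_a=s_a^{-1}\sum_z\sum_{g\in G:\Xi_z(g)=\sigma_a}p(g)\lambda_a(g)$. *)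

From HB Require Import structures.
From mathcomp Require Import all_boot all_order all_algebra all_field.
From mathcomp Require Import mxtens.
Set Implicit Arguments. Unset Strict Implicit. Unset Printing Implicit Defensive.
Import Order.TTheory GRing.Theory Num.Theory.
Local Open Scope ring_scope.

Notation qdim n := (2 ^ n)%N.
Notation op n := 'M[algC]_(qdim n).

Definition adj {m k} (A : 'M[algC]_(m, k)) : 'M[algC]_(k, m) := (map_mx Num.conj A)^T.

(* Hilbert-Schmidt inner product (A|B) = Tr(A^dagger B) *)
Definition hs {m} (A B : 'M[algC]_m) : algC := \tr (adj A *m B).

(* the superoperator |A)(B| : C |-> (B|C) A *)
Definition sop_outer {m} (A B : 'M[algC]_m) : 'M[algC]_m -> 'M[algC]_m :=
  fun C => hs B C *: A.

Definition omega {m} (g : 'M[algC]_m) (A : 'M[algC]_m) := g *m A *m adj g.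
Definition omega_adj {m} (g : 'M[algC]_m) (A : 'M[algC]_m) := adj g *m A *m g.

(* computational basis: basis state x in F_2^n is identified with the
   ordinal x < 2^n, its i-th bit being odd (x %/ 2^i). *)
Definition bit {n} (x : 'I_(qdim n)) (i : 'I_n) : bool := odd (x %/ 2 ^ i).

(* E_x = |x><x| and M = sum_x |E_x)(E_x| *)
Definition Ebas {n} (x : 'I_(qdim n)) : op n := delta_mx x x.
Definition Mdeph {n} (A : op n) : op n := \sum_(x < qdim n) sop_outer (Ebas x) (Ebas x) A.

(* F_2^{2n}: one pair of bits per qubit;
   single-qubit convention sigma_00 = 1, sigma_01 = X, sigma_11 = Y, sigma_10 = Z *)
Definition F2_2n (n : nat) := {ffun 'I_n -> bool * bool}.
Definition F2_n (n : nat) := {ffun 'I_n -> bool}.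

Definition pauli1 (a : bool * bool) (r c : bool) : algC :=
  match a with
  | (false, false) => if r == c then 1 else 0
  | (false, true)  => if r != c then 1 else 0
  | (true, true)   => if r == c then 0 else if r then 'i else - 'i
  | (true, false)  => if r == c then (if r then -1 else 1) else 0
  end.

Definition pauli {n} (a : F2_2n n) : op n :=
  \matrix_(x, y) \prod_(i < n) pauli1 (a i) (bit x i) (bit y i).

Definition Zop {n} (z : F2_n n) : op n := pauli [ffun i => (z i, false)].

Definition unitary {m} (g : 'M[algC]_m) := g *m adj g = 1%:M.

Definition clifford {n} (g : op n) :=
  unitary g /\ forall a : F2_2n n, exists b : F2_2n n,
      omega g (pauli a) = pauli b \/ omega g (pauli a) = - pauli b.

(* Xi_z(g) = sigma_a, i.e. g^dagger Z_z g = +- sigma_a *)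
Definition Xi_is {n} (z : F2_n n) (g : op n) (a : F2_2n n) : bool :=
  (omega_adj g (Zop z) == pauli a) || (omega_adj g (Zop z) == - pauli a).

(* p is a probability distribution on the finite set G (a duplicate-free list) *)
Definition prob_on {n} (G : seq (op n)) (p : op n -> algC) :=
  (forall g, g \in G -> 0 <= p g) /\ \sum_(g <- G) p g = 1.

Definition psd {m} (A : 'M[algC]_m) :=
  forall v : 'cV[algC]_m, 0 <= (adj v *m A *m v) 0 0.

Definition choi {m} (L : 'M[algC]_m -> 'M[algC]_m) : 'M[algC]_(m * m) :=
  \sum_(i < m) \sum_(j < m) (delta_mx i j *t L (delta_mx i j)).

(* quantum channel: linear, completely positive, trace preserving *)
Definition channel {m} (L : 'M[algC]_m -> 'M[algC]_m) :=
  [/\ forall (c : algC) A B, L (c *: A + B) = c *: L A + L B,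
      psd (choi L) &
      forall A, \tr (L A) = \tr A].

Definition pauli_channel {n} (L : op n -> op n) :=
  exists q : F2_2n n -> algC,
    [/\ forall b, 0 <= q b, \sum_b q b = 1 &
        forall rho, L rho = \sum_b q b *: (pauli b *m rho *m pauli b)].

Definition frame {n} (G : seq (op n)) (p : op n -> algC) (A : op n) : op n :=
  \sum_(g <- G) p g *: omega_adj g (Mdeph (omega g A)).
Definition noisy_frame {n} (G : seq (op n)) (p : op n -> algC)
    (Lam : op n -> op n -> op n) (A : op n) : op n :=
  \sum_(g <- G) p g *: omega_adj g (Mdeph (omega g (Lam g A))).

Definition s_coef {n} (G : seq (op n)) (p : op n -> algC) (a : F2_2n n) : algC :=
  \sum_(z : F2_n n) \sum_(g <- G | Xi_is z g a) p g.

Definition Lbar {n} (G : seq (op n)) (p : op n -> algC)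
    (Lam : op n -> op n -> op n) (a : F2_2n n) (A : op n) : op n :=
  (s_coef G p a)^-1 *: \sum_(z : F2_n n) \sum_(g <- G | Xi_is z g a) p g *: Lam g A.

Definition lbar {n} (G : seq (op n)) (p : op n -> algC)
    (lam : op n -> F2_2n n -> algC) (a : F2_2n n) : algC :=
  (s_coef G p a)^-1 * \sum_(z : F2_n n) \sum_(g <- G | Xi_is z g a) p g * lam g a.

From mathcomp Require Import all_boot all_order all_algebra all_field.
From mathcomp Require Import mxtens.
From mathcomp Require Import ring.
Set Implicit Arguments. Unset Strict Implicit. Unset Printing Implicit Defensive.
Import Order.TTheory GRing.Theory Num.Theory.
Local Open Scope ring_scope.

(** The dephasing map is diagonal in the Pauli basis: by orthogonality of the characters
    z |-> (-1)^(z.x), M = d^-1 sum_z |Z_z)(Z_z|.  Conjugation by a Clifford g sends each Z_z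
    to +-sigma_a with a = Xi_z(g), and z |-> Xi_z(g) is injective, so
    omega(g)^dag M omega(g) = d^-1 sum_a c_a(g) |sigma_a)(sigma_a| with c_a(g) in {0,1}.
    Averaging over p gives both frame operators, with s_a = sum_g p(g) c_a(g) in [0,1];
    since S sigma_a = s_a sigma_a and S is injective, s_a > 0.  Then Lbar_a is a convex
    combination of the channels Lambda(g).  For a Pauli channel, sigma_b sigma_a sigma_b =
    +-sigma_a makes lambda_a(g) a convex combination of signs, so lambda_a(g) and its
    average lbar_a lie in [-1, 1]. *)

Lemma binary_expansion n x :
  (x < 2 ^ n)%N -> x = (\sum_(i < n) odd (x %/ 2 ^ i) * 2 ^ i)%N.
Proof.
elim: n x => [|n IHn] x lt_x; first by rewrite big_ord0; case: x lt_x.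
have lt_half : (x %/ 2 < 2 ^ n)%N by rewrite ltn_divLR // -expnSr.
rewrite big_ord_recl /= expn0 divn1 muln1.
have -> : (\sum_(i < n) odd (x %/ 2 ^ bump 0 i) * 2 ^ bump 0 i =
          2 * \sum_(i < n) odd (x %/ 2 %/ 2 ^ i) * 2 ^ i)%N.
  by rewrite big_distrr; apply: eq_bigr => i _; rewrite expnS divnMA mulnCA.
by rewrite -(IHn _ lt_half) divn2 mulnC muln2 odd_double_half.
Qed.

Definition bits n (x : 'I_(qdim n)) : F2_n n := [ffun i => bit x i].

Lemma bits_inj n : injective (@bits n).
Proof.
move=> x y /ffunP eq_xy; apply/val_inj.
rewrite /= (binary_expansion (ltn_ord x)) (binary_expansion (ltn_ord y)).
by apply: eq_bigr => i _; have := eq_xy i; rewrite !ffunE /bit => ->.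
Qed.

Lemma bits_bij n : bijective (@bits n).
Proof. by apply: (inj_card_bij (@bits_inj n)); rewrite card_ffun card_bool !card_ord. Qed.

Lemma reindex_bits n (V : nmodType) (F : F2_n n -> V) :
  \sum_(x < qdim n) F (bits x) = \sum_f F f.
Proof. by rewrite (reindex (@bits n)) //; apply: onW_bij (bits_bij n). Qed.

Lemma prod_eq_bit n (x y : 'I_(qdim n)) :
  \prod_i ((bit x i == bit y i)%:R : algC) = (x == y)%:R.
Proof.
have [<-|neq_xy] := eqVneq x y; first by rewrite big1 // => i _; rewrite eqxx.
have [i neq_i] : exists i, bit x i != bit y i.
  apply/existsP; apply: contraR neq_xy => /existsPn eq_bits.
  by apply/eqP/bits_inj/ffunP => i; rewrite !ffunE; apply/eqP/negPn/eq_bits.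
by rewrite (bigD1 i) //= (negbTE neq_i) mul0r.
Qed.

Lemma exchange_big_count (V : nmodType) (I : finType) J (r : seq J)
    (P : I -> J -> bool) (F : J -> V) :
  \sum_i \sum_(j <- r | P i j) F j = \sum_(j <- r) F j *+ #|[pred i | P i j]|.
Proof.
under eq_bigr do rewrite big_mkcond; rewrite exchange_big /=.
by apply: eq_bigr => j _; rewrite -big_mkcond -sumr_const.
Qed.

Lemma weighted_sum_itv (R : numDomainType) (I : eqType) (r : seq I) (w x : I -> R) lo hi :
  (forall i, i \in r -> 0 <= w i) -> (forall i, i \in r -> lo <= x i <= hi) ->
  lo * \sum_(i <- r) w i <= \sum_(i <- r) w i * x i <= hi * \sum_(i <- r) w i.
Proof.
move=> w_ge0 x_itv; rewrite !mulr_sumr !big_seq.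
apply/andP; split; apply: ler_sum => i ri; have /andP[lo_x x_hi] := x_itv i ri.
  by rewrite mulrC; apply: ler_wpM2l; rewrite ?w_ge0.
by rewrite [hi * _]mulrC; apply: ler_wpM2l; rewrite ?w_ge0.
Qed.

Definition eq_upto_sign (V : zmodType) (X Y : V) := X = Y \/ X = - Y.

Lemma eq_upto_sign_sym (V : zmodType) (X Y : V) : eq_upto_sign X Y -> eq_upto_sign Y X.
Proof. by case=> ->; [left | right; rewrite opprK]. Qed.

Lemma eq_upto_sign_trans (V : zmodType) (X Y Z : V) :
  eq_upto_sign X Y -> eq_upto_sign Y Z -> eq_upto_sign X Z.
Proof. by case=> -> [] ->; rewrite ?opprK; [left | right | right | left]. Qed.

Lemma eq_upto_sign_map (V W : zmodType) (f : V -> W) (X Y : V) :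
  (forall v, f (- v) = - f v) -> eq_upto_sign X Y -> eq_upto_sign (f X) (f Y).
Proof. by move=> fN [] ->; [left | right; rewrite fN]. Qed.

Definition tensor_op n (f : 'I_n -> bool -> bool -> algC) : op n :=
  \matrix_(x, y) \prod_i f i (bit x i) (bit y i).

Lemma pauliE n (a : F2_2n n) : pauli a = tensor_op (fun i => pauli1 (a i)).
Proof. by []. Qed.

Lemma eq_tensor_op n (f g : 'I_n -> bool -> bool -> algC) :
  (forall i r c, f i r c = g i r c) -> tensor_op f = tensor_op g.
Proof. by move=> eq_fg; apply/matrixP => x y; rewrite !mxE; apply: eq_bigr. Qed.

Lemma mul_tensor_op n (f g : 'I_n -> bool -> bool -> algC) :
  tensor_op f *m tensor_op g = tensor_op (fun i r c => \sum_w f i r w * g i w c).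
Proof.
apply/matrixP => x y; rewrite !mxE bigA_distr_bigA /= -reindex_bits.
apply: eq_bigr => z _; rewrite !mxE -big_split /=.
by apply: eq_bigr => i _; rewrite ffunE.
Qed.

Lemma tr_tensor_op n (f : 'I_n -> bool -> bool -> algC) :
  \tr (tensor_op f) = \prod_i \sum_r f i r r.
Proof.
rewrite bigA_distr_bigA /= -reindex_bits; apply: eq_bigr => x _.
by rewrite mxE; apply: eq_bigr => i _; rewrite ffunE.
Qed.

Lemma adj_tensor_op n (f : 'I_n -> bool -> bool -> algC) :
  adj (tensor_op f) = tensor_op (fun i r c => (f i c r)^*).
Proof. by apply/matrixP => x y; rewrite !mxE rmorph_prod. Qed.

Lemma tensor_opZ n (e : 'I_n -> algC) (f : 'I_n -> bool -> bool -> algC) :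
  tensor_op (fun i r c => e i * f i r c) = (\prod_i e i) *: tensor_op f.
Proof. by apply/matrixP => x y; rewrite !mxE big_split. Qed.

Definition pauli1_commute_sign (u v : bool * bool) : algC :=
  if (u == (false, false)) || (v == (false, false)) || (u == v) then 1 else -1.

Local Ltac qubit_simpl :=
  rewrite /= !big_bool /= ?rmorphN /= ?(conjC0, conjC1, conjCi);
  rewrite ?(mul0r, mulr0, mul1r, mulr1, addr0, add0r, mulNr, mulrN, mulCii, opprK, oppr0);
  rewrite ?(subrr, addNr).

Lemma hs_pauli1 u v :
  \sum_r \sum_w (pauli1 u w r)^* * pauli1 v w r = if u == v then 2 else 0.
Proof. by case: u v => [[] []] [[] []]; qubit_simpl. Qed.

Lemma pauli1_conj u v r c :
  \sum_l (\sum_k pauli1 v r k * pauli1 u k l) * pauli1 v l c =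
  pauli1_commute_sign u v * pauli1 u r c.
Proof.
by case: u v r c => [[] []] [[] []] [] []; rewrite /pauli1_commute_sign; qubit_simpl.
Qed.

Lemma adj_entry p q (X : 'M[algC]_(p, q)) i j : adj X i j = (X j i)^*.
Proof. by rewrite !mxE. Qed.

Lemma adjM p q r (X : 'M[algC]_(p, q)) (Y : 'M[algC]_(q, r)) :
  adj (X *m Y) = adj Y *m adj X.
Proof. by rewrite /adj map_mxM trmx_mul. Qed.

Lemma adjK p q (X : 'M[algC]_(p, q)) : adj (adj X) = X.
Proof. by apply/matrixP => i j; rewrite !mxE conjCK. Qed.

Section HilbertSchmidt.
Variable m : nat.
Implicit Types g A B : 'M[algC]_m.

Lemma hsZr A c B : hs A (c *: B) = c * hs A B.
Proof. by rewrite /hs -scalemxAr mxtraceZ. Qed.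

Lemma hsNr A B : hs A (- B) = - hs A B.
Proof. by rewrite /hs mulmxN linearN. Qed.

Lemma hsNl A B : hs (- A) B = - hs A B.
Proof. by rewrite /hs /adj map_mxN linearN /= mulNmx linearN. Qed.

Lemma hs_sumr A I (r : seq I) (P : pred I) (F : I -> 'M[algC]_m) :
  hs A (\sum_(i <- r | P i) F i) = \sum_(i <- r | P i) hs A (F i).
Proof. by rewrite /hs mulmx_sumr raddf_sum. Qed.

Lemma hs_omega g A B : hs A (omega g B) = hs (omega_adj g A) B.
Proof. by rewrite /hs /omega /omega_adj !adjM adjK !mulmxA mxtrace_mulC !mulmxA. Qed.

Lemma omegaN g A : omega g (- A) = - omega g A.
Proof. by rewrite /omega mulmxN mulNmx. Qed.

Lemma omega_adjN g A : omega_adj g (- A) = - omega_adj g A.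
Proof. by rewrite /omega_adj mulmxN mulNmx. Qed.

Lemma omega_adjZ g c A : omega_adj g (c *: A) = c *: omega_adj g A.
Proof. by rewrite /omega_adj -scalemxAr -scalemxAl. Qed.

Lemma omega_adj_sum g I (r : seq I) (P : pred I) (F : I -> 'M[algC]_m) :
  omega_adj g (\sum_(i <- r | P i) F i) = \sum_(i <- r | P i) omega_adj g (F i).
Proof. by rewrite /omega_adj mulmx_sumr mulmx_suml. Qed.

Lemma omega_adjK g : unitary g -> cancel (omega g) (omega_adj g).
Proof.
move=> ug A; have adj_g_g : adj g *m g = 1%:M by apply: mulmx1C.
by rewrite /omega_adj /omega !mulmxA adj_g_g mul1mx -mulmxA adj_g_g mulmx1.
Qed.

Lemma omegaK g : unitary g -> cancel (omega_adj g) (omega g).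
Proof. by move=> ug A; rewrite /omega_adj /omega !mulmxA ug mul1mx -mulmxA ug mulmx1. Qed.

Lemma sop_outerZ A B c C : sop_outer A B (c *: C) = c *: sop_outer A B C.
Proof. by rewrite /sop_outer hsZr scalerA. Qed.

Lemma sop_outer_sum A B I (r : seq I) (P : pred I) (F : I -> 'M[algC]_m) :
  sop_outer A B (\sum_(i <- r | P i) F i) = \sum_(i <- r | P i) sop_outer A B (F i).
Proof. by rewrite /sop_outer hs_sumr scaler_suml. Qed.

Lemma sop_outer_upto_sign A B C :
  eq_upto_sign A B -> sop_outer A A C = sop_outer B B C.
Proof. by rewrite /sop_outer => -[] ->; rewrite ?hsNl ?scaleNr ?scalerN ?opprK. Qed.

End HilbertSchmidt.

Lemma dim_neq0 n : (qdim n)%:R != 0 :> algC.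
Proof. by rewrite pnatr_eq0 expn_eq0. Qed.

Lemma hs_pauli n (a b : F2_2n n) :
  hs (pauli a) (pauli b) = if a == b then (qdim n)%:R else 0.
Proof.
rewrite /hs !pauliE adj_tensor_op mul_tensor_op tr_tensor_op.
under eq_bigr => i _ do rewrite hs_pauli1.
have [<-|neq_ab] := eqVneq a b.
  by rewrite (eq_bigr (fun=> 2)) => [|i _]; rewrite ?eqxx // prodr_const card_ord natrX.
have [i neq_i] : exists i, a i != b i.
  apply/existsP; apply: contraR neq_ab => /existsPn eq_ab.
  by apply/eqP/ffunP => i; apply/eqP/negPn/eq_ab.
by rewrite (bigD1 i) //= (negbTE neq_i) mul0r.
Qed.

Lemma hs_pauli_diag n (a : F2_2n n) : hs (pauli a) (pauli a) = (qdim n)%:R.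
Proof. by rewrite hs_pauli eqxx. Qed.

Lemma pauli_neq0 n (a : F2_2n n) : pauli a != 0.
Proof.
apply/eqP => a0; have := hs_pauli_diag a; rewrite {2}a0 /hs mulmx0 mxtrace0.
by move/eqP; rewrite eq_sym (negbTE (dim_neq0 n)).
Qed.

Lemma eq_upto_sign_pauli n (a b : F2_2n n) : eq_upto_sign (pauli a) (pauli b) -> a = b.
Proof.
move/(eq_upto_sign_map (@hsNr _ (pauli a))); rewrite !hs_pauli eqxx.
have [//|_] := eqVneq a b; rewrite /eq_upto_sign /= oppr0.
by case=> /eqP; rewrite (negbTE (dim_neq0 n)).
Qed.

Lemma pauli_conj n (a b : F2_2n n) :
  pauli b *m pauli a *m pauli b = (\prod_i pauli1_commute_sign (a i) (b i)) *: pauli a.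
Proof.
rewrite !pauliE !mul_tensor_op -tensor_opZ.
by apply: eq_tensor_op => i r c; apply: pauli1_conj.
Qed.

Lemma commute_sign_itv n (a b : F2_2n n) :
  -1 <= \prod_i pauli1_commute_sign (a i) (b i) <= 1.
Proof.
have leN11 : -1 <= 1 :> algC by rewrite (le_trans (lerN10 _) ler01).
suff [->|->] : \prod_i pauli1_commute_sign (a i) (b i) = 1 \/
               \prod_i pauli1_commute_sign (a i) (b i) = -1.
- by rewrite leN11 lexx.
- by rewrite leN11 lexx.
apply: (big_ind (fun x : algC => x = 1 \/ x = -1)); first by left.
  by move=> x y [] -> [] ->; rewrite ?mul1r ?mulN1r ?opprK; [left | right | right | left].
by move=> i _; rewrite /pauli1_commute_sign; case: ifP; [left | right].
Qed.

Definition zchar n (z : F2_n n) (x : 'I_(qdim n)) : algC :=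
  \prod_i (if z i && bit x i then -1 else 1).

Lemma Zop_diag n (z : F2_n n) x y : Zop z x y = (x == y)%:R * zchar z x.
Proof.
rewrite mxE -prod_eq_bit -big_split; apply: eq_bigr => i _; rewrite ffunE.
by case: (z i) (bit x i) (bit y i) => [] [] []; rewrite /= ?mul1r ?mul0r.
Qed.

Lemma conj_zchar n (z : F2_n n) x : (zchar z x)^* = zchar z x.
Proof.
by rewrite rmorph_prod; apply: eq_bigr => i _; case: ifP; rewrite ?rmorphN rmorph1.
Qed.

Lemma zchar_orthogonal n (x y : 'I_(qdim n)) :
  \sum_z zchar z x * zchar z y = (qdim n)%:R * (x == y)%:R.
Proof.
pose F i (b : bool) : algC := (if b && bit x i then -1 else 1) * (if b && bit y i then -1 else 1).
rewrite (eq_bigr (fun z : F2_n n => \prod_i F i (z i))) => [|z _]; last by rewrite -big_split.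
have -> : (qdim n)%:R = \prod_(i < n) 2 :> algC by rewrite prodr_const card_ord natrX.
rewrite -(bigA_distr_bigA F) -prod_eq_bit -big_split /=.
apply: eq_bigr => i _; rewrite big_bool /F /=; clear F.
by case: (bit x i) (bit y i) => [] [] /=; ring.
Qed.

Lemma hs_Zop n (z : F2_n n) (B : op n) : hs (Zop z) B = \sum_x zchar z x * B x x.
Proof.
apply: eq_bigr => x _; rewrite mxE (bigD1 x) //= big1 => [|y neq_yx].
  by rewrite adj_entry Zop_diag eqxx mul1r conj_zchar addr0.
by rewrite adj_entry Zop_diag (negbTE neq_yx) mul0r rmorph0 mul0r.
Qed.

Lemma hs_Ebas n (x : 'I_(qdim n)) (B : op n) : hs (Ebas x) B = B x x.
Proof.
rewrite /hs /mxtrace (bigD1 x) //= big1 => [|y neq_yx].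
  rewrite mxE (bigD1 x) //= big1 => [|k neq_kx]; last by rewrite !mxE (negbTE neq_kx) rmorph0 mul0r.
  by rewrite !mxE eqxx rmorph1 mul1r !addr0.
by rewrite mxE big1 // => k _; rewrite !mxE (negbTE neq_yx) andbF rmorph0 mul0r.
Qed.

Lemma Mdeph_Zop n (B : op n) :
  Mdeph B = (qdim n)%:R^-1 *: \sum_(z : F2_n n) hs (Zop z) B *: Zop z.
Proof.
apply/matrixP => x y; rewrite /Mdeph summxE mxE summxE.
under eq_bigr => w _ do rewrite /sop_outer hs_Ebas !mxE.
under [in RHS]eq_bigr => z _ do rewrite mxE hs_Zop Zop_diag mulr_suml.
have sum_zchar w : \sum_z zchar z w * B w w * ((x == y)%:R * zchar z x) =
                   (qdim n)%:R * (B w w * (x == y)%:R * (w == x)%:R).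
  rewrite mulrCA -zchar_orthogonal mulr_sumr; apply: eq_bigr => z _.
  by rewrite !mulrA (mulrC (zchar z w)) (mulrAC (B w w)).
rewrite exchange_big /=; under [in RHS]eq_bigr => w _ do rewrite sum_zchar.
rewrite -mulr_sumr mulKf ?dim_neq0 //; apply: eq_bigr => w _.
by rewrite -mulrA -natrM mulnb; have [<-|_] := eqVneq x w; rewrite ?andbT ?andbF 1?eq_sym.
Qed.

Section Xi.
Variable n : nat.
Implicit Types (g : op n) (z : F2_n n) (a : F2_2n n).

Lemma XiP z g a : reflect (eq_upto_sign (omega_adj g (Zop z)) (pauli a)) (Xi_is z g a).
Proof. by apply: (iffP orP) => -[] /eqP; by [left | right]. Qed.

Lemma Xi_uniq z g a b : Xi_is z g a -> Xi_is z g b -> a = b.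
Proof.
move=> /XiP Xi_a /XiP Xi_b; apply: eq_upto_sign_pauli.
exact: eq_upto_sign_trans (eq_upto_sign_sym Xi_a) Xi_b.
Qed.

Lemma Xi_inj z z' g a : unitary g -> Xi_is z g a -> Xi_is z' g a -> z = z'.
Proof.
move=> ug /XiP Xi_z /XiP Xi_z'.
have := eq_upto_sign_trans Xi_z (eq_upto_sign_sym Xi_z').
move/(eq_upto_sign_map (@omegaN _ g)); rewrite !omegaK // => /eq_upto_sign_pauli eq_zz'.
by apply/ffunP => i; have := congr1 (fun b : F2_2n n => (b i).1) eq_zz'; rewrite !ffunE.
Qed.

(* The Clifford condition says omega g maps Paulis injectively to signed Paulis; being an
   injection of a finite set this map is onto, so Z_z = +-omega g (sigma_a) for some a. *)
Lemma Xi_exists z g : clifford g -> exists a, Xi_is z g a.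
Proof.
case=> ug /fin_all_exists [img img_sign].
have img_inj : injective img.
  move=> a b eq_img; apply: eq_upto_sign_pauli.
  have sign_a := eq_upto_sign_map (@omega_adjN _ g) (img_sign a).
  have sign_b := eq_upto_sign_map (@omega_adjN _ g) (img_sign b).
  rewrite !omega_adjK // eq_img in sign_a sign_b.
  exact: eq_upto_sign_trans sign_a (eq_upto_sign_sym sign_b).
have [pre imgK preK] := injF_bij img_inj.
exists (pre [ffun i => (z i, false)]); apply/XiP/eq_upto_sign_sym.
have := eq_upto_sign_map (@omega_adjN _ g) (img_sign (pre [ffun i => (z i, false)])).
by rewrite preK omega_adjK.
Qed.

Definition Xi_count g a := #|[pred z | Xi_is z g a]|.

Lemma Xi_count_le1 g a : unitary g -> (Xi_count g a <= 1)%N.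
Proof.
by move=> ug; apply/card_le1_eqP => z z'; rewrite !inE => Xi_z Xi_z'; apply: Xi_inj Xi_z' Xi_z.
Qed.

Lemma omega_adj_Mdeph_omega g B : clifford g ->
  omega_adj g (Mdeph (omega g B)) =
  (qdim n)%:R^-1 *: \sum_a sop_outer (pauli a) (pauli a) B *+ Xi_count g a.
Proof.
move=> cliff_g; rewrite Mdeph_Zop omega_adjZ omega_adj_sum; congr (_ *: _).
rewrite -(exchange_big_count _ (fun z a => Xi_is z g a)); apply: eq_bigr => z _.
have [a Xi_a] := Xi_exists z cliff_g.
rewrite (big_pred1 a) => [|b]; last by apply/idP/eqP => [/Xi_uniq/(_ Xi_a)|->].
rewrite omega_adjZ hs_omega -[LHS]/(sop_outer _ _ B).
exact/sop_outer_upto_sign/XiP.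
Qed.

End Xi.

Lemma tensmxZr p q r s (A : 'M[algC]_(p, q)) c (B : 'M[algC]_(r, s)) :
  A *t (c *: B) = c *: (A *t B).
Proof. by apply/matrixP => i j; rewrite !mxE mulrCA. Qed.

Lemma tensmx_sumr p q r s (A : 'M[algC]_(p, q)) I (rs : seq I) (P : pred I)
    (F : I -> 'M[algC]_(r, s)) :
  A *t (\sum_(k <- rs | P k) F k) = \sum_(k <- rs | P k) A *t F k.
Proof.
by apply/matrixP => i j; rewrite mxE !summxE mulr_sumr; apply: eq_bigr => k _; rewrite mxE.
Qed.

Lemma psdZ k c (A : 'M[algC]_k) : 0 <= c -> psd A -> psd (c *: A).
Proof. by move=> c_ge0 psdA v; rewrite -scalemxAr -scalemxAl mxE mulr_ge0. Qed.

Lemma psd_sum k I (r : seq I) (P : pred I) (F : I -> 'M[algC]_k) :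
  (forall i, P i -> psd (F i)) -> psd (\sum_(i <- r | P i) F i).
Proof.
move=> psdF v; rewrite mulmx_sumr mulmx_suml summxE sumr_ge0 // => i Pi.
exact: psdF.
Qed.

Section Channels.
Variable m : nat.
Implicit Types L : 'M[algC]_m -> 'M[algC]_m.

Lemma eq_choi L L' : L =1 L' -> choi L = choi L'.
Proof. by move=> eqL; apply: eq_bigr => i _; apply: eq_bigr => j _; rewrite eqL. Qed.

Lemma choiZ L c : choi (fun A => c *: L A) = c *: choi L.
Proof.
by rewrite /choi scaler_sumr; apply: eq_bigr => i _; rewrite scaler_sumr;
  apply: eq_bigr => j _; rewrite tensmxZr.
Qed.

Lemma choi_sum I (r : seq I) (P : pred I) (F : I -> 'M[algC]_m -> 'M[algC]_m) :
  choi (fun A => \sum_(k <- r | P k) F k A) = \sum_(k <- r | P k) choi (F k).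
Proof.
rewrite /choi; under eq_bigr do under eq_bigr do rewrite tensmx_sumr.
by under eq_bigr do rewrite exchange_big; rewrite exchange_big.
Qed.

Lemma eq_channel L L' : L =1 L' -> channel L -> channel L'.
Proof.
move=> eqL [linL psdL trL]; split=> [c A B||A]; last by rewrite -eqL trL.
  by rewrite -!eqL linL.
by rewrite -(eq_choi eqL).
Qed.

Lemma channel_mean (I : eqType) (r : seq I) (w : I -> algC)
    (L : I -> 'M[algC]_m -> 'M[algC]_m) :
  (forall i, i \in r -> 0 <= w i) -> (forall i, i \in r -> channel (L i)) ->
  0 < \sum_(i <- r) w i ->
  channel (fun A => (\sum_(i <- r) w i)^-1 *: \sum_(i <- r) w i *: L i A).
Proof.
move=> w_ge0 chL sum_gt0; split=> [c A B||A].
- rewrite scalerA mulrC -scalerA -scalerDr scaler_sumr -big_split /=; congr (_ *: _).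
  rewrite !big_seq; apply: eq_bigr => i ri; have [linL _ _] := chL i ri.
  by rewrite linL scalerDr !scalerA mulrC.
- rewrite choiZ; apply: psdZ; first by rewrite invr_ge0 ltW.
  rewrite choi_sum big_seq_cond; apply: psd_sum => i /andP[ri _].
  by rewrite choiZ; apply: psdZ (w_ge0 i ri) _; have [] := chL i ri.
- have tr_sum : \tr (\sum_(i <- r) w i *: L i A) = (\sum_(i <- r) w i) * \tr A.
    rewrite raddf_sum mulr_suml /= !big_seq; apply: eq_bigr => i ri.
    by have [_ _ trL] := chL i ri; rewrite mxtraceZ trL.
  by rewrite mxtraceZ tr_sum mulKf // gt_eqF.
Qed.

End Channels.

Lemma pauli_channel_eigen_itv n (L : op n -> op n) a l :
  pauli_channel L -> L (pauli a) = l *: pauli a -> -1 <= l <= 1.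
Proof.
case=> q [q_ge0 q_sum Lq] La.
have := congr1 (hs (pauli a)) La; rewrite Lq hs_sumr hsZr hs_pauli_diag.
under eq_bigr => b _ do rewrite hsZr pauli_conj hsZr hs_pauli_diag mulrA.
rewrite -mulr_suml => /(mulIf (dim_neq0 n)) <-.
have := weighted_sum_itv (r := index_enum _) (fun b _ => q_ge0 b)
  (fun b _ => commute_sign_itv a b).
by rewrite q_sum !mulr1.
Qed.

Section Frame.
Variables (n : nat) (G : seq (op n)) (p : op n -> algC).
Hypothesis cliffG : forall g, g \in G -> clifford g.

Lemma s_coefE a : s_coef G p a = \sum_(g <- G) p g *+ Xi_count g a.
Proof. exact: exchange_big_count. Qed.

Lemma noisy_frameE Lam A :
  noisy_frame G p Lam A = (qdim n)%:R^-1 *: \sum_a sop_outer (pauli a) (pauli a)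
    (\sum_(g <- G) (p g *+ Xi_count g a) *: Lam g A).
Proof.
rewrite /noisy_frame big_seq (eq_bigr (fun g => p g *: ((qdim n)%:R^-1 *: \sum_a
    sop_outer (pauli a) (pauli a) (Lam g A) *+ Xi_count g a))) => [|g /cliffG cliff_g];
  last by rewrite omega_adj_Mdeph_omega.
rewrite -big_seq; under eq_bigr do rewrite scalerA mulrC -scalerA scaler_sumr.
rewrite -scaler_sumr exchange_big /=; congr (_ *: _); apply: eq_bigr => a _.
by rewrite sop_outer_sum; apply: eq_bigr => g _; rewrite sop_outerZ -scalerMnl scalerMnr.
Qed.

Lemma frameE A :
  frame G p A = (qdim n)%:R^-1 *: \sum_a s_coef G p a *: sop_outer (pauli a) (pauli a) A.
Proof.
rewrite -[LHS]/(noisy_frame G p (fun _ => id) A) noisy_frameE.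
by congr (_ *: _); apply: eq_bigr => a _; rewrite -scaler_suml -s_coefE sop_outerZ.
Qed.

Lemma frame_pauli a : frame G p (pauli a) = s_coef G p a *: pauli a.
Proof.
rewrite frameE (bigD1 a) //= big1 => [|b neq_ba]; last first.
  by rewrite /sop_outer hs_pauli (negbTE neq_ba) !scale0r scaler0.
by rewrite /sop_outer hs_pauli eqxx addr0 scalerA scalerA mulrCA mulVf ?dim_neq0 ?mulr1.
Qed.

Lemma frame0 : frame G p 0 = 0.
Proof.
by rewrite frameE big1 ?scaler0 // => a _; rewrite /sop_outer /hs mulmx0 mxtrace0 !scale0r scaler0.
Qed.

Lemma LbarE Lam a A : Lbar G p Lam a A =
  (s_coef G p a)^-1 *: \sum_(g <- G) (p g *+ Xi_count g a) *: Lam g A.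
Proof.
rewrite /Lbar (exchange_big_count _ _ (fun g => p g *: Lam g A)).
by under eq_bigr do rewrite scalerMnl.
Qed.

Lemma lbarE lam a : lbar G p lam a =
  (s_coef G p a)^-1 * \sum_(g <- G) (p g *+ Xi_count g a) * lam g a.
Proof.
rewrite /lbar (exchange_big_count _ _ (fun g => p g * lam g a)).
by under eq_bigr do rewrite -mulrnAl.
Qed.

Lemma noisy_frame_Lbar Lam A : (forall a, s_coef G p a != 0) ->
  noisy_frame G p Lam A = (qdim n)%:R^-1 *: \sum_a
    s_coef G p a *: sop_outer (pauli a) (pauli a) (Lbar G p Lam a A).
Proof.
move=> s_neq0; rewrite noisy_frameE; congr (_ *: _); apply: eq_bigr => a _.
by rewrite LbarE sop_outerZ scalerA mulfV ?scale1r.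
Qed.

Lemma Lbar_pauli Lam lam a :
  (forall g, g \in G -> Lam g (pauli a) = lam g a *: pauli a) ->
  Lbar G p Lam a (pauli a) = lbar G p lam a *: pauli a.
Proof.
move=> Lam_pauli; rewrite LbarE lbarE -scalerA scaler_suml !big_seq; congr (_ *: _).
by apply: eq_bigr => g gG; rewrite Lam_pauli // scalerA.
Qed.

Hypothesis probp : prob_on G p.

Lemma Xi_weight_ge0 g a : g \in G -> 0 <= p g *+ Xi_count g a.
Proof. by case: probp => p_ge0 _ gG; rewrite mulrn_wge0 ?p_ge0. Qed.

Lemma s_coef_ge0 a : 0 <= s_coef G p a.
Proof.
by rewrite s_coefE big_seq sumr_ge0 // => g; apply: Xi_weight_ge0.
Qed.

Lemma s_coef_le1 a : s_coef G p a <= 1.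
Proof.
case: probp => p_ge0 <-; rewrite s_coefE !big_seq ler_sum // => g gG.
have [ug _] := cliffG gG.
by case: (Xi_count g a) (Xi_count_le1 a ug) => [|[]] // _; rewrite ?mulr0n ?mulr1n ?p_ge0.
Qed.

Lemma s_coef_gt0 a : bijective (frame G p) -> 0 < s_coef G p a.
Proof.
move=> /bij_inj frame_inj; rewrite lt0r s_coef_ge0 andbT.
apply: contra_neq (pauli_neq0 a) => s0; apply: frame_inj.
by rewrite frame_pauli s0 scale0r frame0.
Qed.

Lemma Lbar_channel Lam a : 0 < s_coef G p a ->
  (forall g, g \in G -> channel (Lam g)) -> channel (Lbar G p Lam a).
Proof.
move=> s_gt0 chL; apply: eq_channel (channel_mean (@Xi_weight_ge0^~ a) chL _) => [A|].
  by rewrite LbarE s_coefE.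
by rewrite -s_coefE.
Qed.

Lemma lbar_itv lam a : 0 < s_coef G p a ->
  (forall g, g \in G -> -1 <= lam g a <= 1) -> -1 <= lbar G p lam a <= 1.
Proof.
move=> s_gt0 lam_itv; have := weighted_sum_itv (@Xi_weight_ge0^~ a) lam_itv.
rewrite -s_coefE mulN1r mul1r => /andP[lo hi].
by rewrite lbarE ler_pdivlMl // ler_pdivrMl // mulrN1 mulr1 lo hi.
Qed.

End Frame.

Theorem lemma1 (n : nat) (G : seq (op n)) (p : op n -> algC)
    (Lam : op n -> op n -> op n) :
  uniq G ->
  (forall g, g \in G -> clifford g) ->
  prob_on G p ->
  bijective (frame G p) ->
  (forall g, g \in G -> channel (Lam g)) ->
  [/\ (forall A, frame G p A =
         (qdim n)%:R^-1 *: \sum_(a : F2_2n n)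
            s_coef G p a *: sop_outer (pauli a) (pauli a) A),
      (forall a, 0 < s_coef G p a /\ s_coef G p a <= 1),
      (forall a, channel (Lbar G p Lam a)),
      (forall A, noisy_frame G p Lam A =
         (qdim n)%:R^-1 *: \sum_(a : F2_2n n)
            s_coef G p a *: sop_outer (pauli a) (pauli a) (Lbar G p Lam a A)) &
      ((forall g, g \in G -> pauli_channel (Lam g)) ->
       forall lam : op n -> F2_2n n -> algC,
         (forall g a, g \in G -> Lam g (pauli a) = lam g a *: pauli a) ->
         forall a, Lbar G p Lam a (pauli a) = lbar G p lam a *: pauli a /\
                   -1 <= lbar G p lam a <= 1)].
Proof.
move=> _ cliffG probp frame_bij chL.
have s_gt0 a : 0 < s_coef G p a by apply: s_coef_gt0.
split=> [A|a|a|A|pauliL lam Lam_pauli a].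
- exact: frameE.
- by split; [apply: s_gt0 | apply: s_coef_le1].
- exact: Lbar_channel.
- by apply: noisy_frame_Lbar => // a; rewrite gt_eqF.
- split; first exact: Lbar_pauli (fun g => Lam_pauli g a).
  apply: lbar_itv => // g gG.
  exact: pauli_channel_eigen_itv (pauliL g gG) (Lam_pauli g a gG).
Qed.
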